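(* Let $r\ge 0$, $t\ge 0$, $k\ge 0$ and $\ell\ge 1$ be integers, and let $H$ and $L$ be graphs such that $H$ has treewidth at most $t$ and $\Delta(L^r)\le k$. If a graph $G$ is an $r$-shallow minor of $H\boxtimes L\boxtimes K_\ell$, then $G$ is contained in $J\boxtimes L^{2r+1}\boxtimes K_{\ell(k+1)}$ for some graph $J$ with treewidth at most $\binom{2r+1+t}{t}-1$.
   Context: All graphs are finite, simple and undirected. A graph $G$ is contained in a graph $G'$ if $G$ is isomorphic to a subgraph of $G'$. The strong product $G_1\boxtimes G_2$ has vertex set $V(G_1)\times V(G_2)$, with distinct vertices $(a,v),(b,u)$ adjacent iff ($ab\in E(G_1)$ and $u=v$) or ($a=b$ and $uv\in E(G_2)$) or ($ab\in E(G_1)$ and $uv\in E(G_2)$); the strong product is associative. $K_\ell$ is the complete graph on $\ell$ vertices. For an integer $m\ge 0$, the $m$-th power $L^m$ of $L$ has vertex set $V(L)$ with distinct $u,v$ adjacent iff $\mathrm{dist}_L(u,v)\le m$. $\Delta$ denotes maximum degree. A model of a graph $G$ in a graph $G'$ is a map $\mu$ assigning to each $v\in V(G)$ a connected subgraph $\mu(v)$ of $G'$ such that the $\mu(v)$ are pairwise vertex-disjoint and for every edge $vw\in E(G)$ some edge of $G'$ joins a vertex of $\mu(v)$ to a vertex of $\mu(w)$. $G$ is an $r$-shallow minor of $G'$ if there is such a model in which every $\mu(v)$ has radius at most $r$ (i.e. contains a vertex at distance at most $r$ within $\mu(v)$ from all vertices of $\mu(v)$). *)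

From mathcomp Require Import all_boot.
Set Implicit Arguments. Unset Strict Implicit. Unset Printing Implicit Defensive.

Record sgraph := SGraph {
  svert :> finType;
  sadj : rel svert;
  sadj_sym : symmetric sadj;
  sadj_irr : irreflexive sadj }.

Fixpoint walkle (T : finType) (e : rel T) (m : nat) (u v : T) : bool :=
  match m with
  | 0 => u == v
  | m'.+1 => walkle e m' u v || [exists w, e u w && walkle e m' w v]
  end.

Lemma walkle_mono (T : finType) (e : rel T) m u v :
  walkle e m u v -> walkle e m.+1 u v.
Proof. by move=> h /=; rewrite h. Qed.

Lemma walkle_snoc (T : finType) (e : rel T) m u w v :
  walkle e m u w -> e w v -> walkle e m.+1 u v.
Proof.
elim: m u => [|m IH] u /=.
  move=> /eqP -> ewv; apply/orP; right; apply/existsP; exists v.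
  by rewrite ewv /=.
case/orP=> [h|/existsP [x /andP [eux hx]]] ewv.
  by have /= -> := IH _ h ewv.
apply/orP; right; apply/existsP; exists x; rewrite eux /=.
exact: IH hx ewv.
Qed.

Lemma walkle_sym (T : finType) (e : rel T) : symmetric e ->
  forall m u v, walkle e m u v -> walkle e m v u.
Proof.
move=> se; elim=> [|m IH] u v /=; first by rewrite eq_sym.
case/orP=> [h|/existsP [w /andP [euw hw]]].
  by rewrite IH.
apply: walkle_snoc (IH _ _ hw) _; by rewrite se.
Qed.

Definition sprod_rel (G1 G2 : sgraph) : rel (G1 * G2)%type :=
  fun x y =>
    [|| sadj x.1 y.1 && (x.2 == y.2),
        (x.1 == y.1) && sadj x.2 y.2
      | sadj x.1 y.1 && sadj x.2 y.2].

Lemma sprod_sym G1 G2 : symmetric (@sprod_rel G1 G2).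
Proof.
move=> [a v] [b u]; rewrite /sprod_rel /=.
by rewrite (@sadj_sym G1 a b) (@sadj_sym G2 v u) (eq_sym a b) (eq_sym v u).
Qed.

Lemma sprod_irr G1 G2 : irreflexive (@sprod_rel G1 G2).
Proof. by move=> [a v]; rewrite /sprod_rel /= (@sadj_irr G1 a) (@sadj_irr G2 v) !andbF. Qed.

Definition sprod (G1 G2 : sgraph) : sgraph :=
  SGraph (@sprod_sym G1 G2) (@sprod_irr G1 G2).

Definition Kn_rel (l : nat) : rel 'I_l := fun x y => x != y.
Lemma Kn_sym l : symmetric (@Kn_rel l).
Proof. by move=> x y; rewrite /Kn_rel eq_sym. Qed.
Lemma Kn_irr l : irreflexive (@Kn_rel l).
Proof. by move=> x; rewrite /Kn_rel eqxx. Qed.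
Definition Kn (l : nat) : sgraph := SGraph (@Kn_sym l) (@Kn_irr l).

Definition gpower_rel (L : sgraph) (m : nat) : rel L :=
  fun u v => (u != v) && walkle (@sadj L) m u v.
Lemma gpower_sym L m : symmetric (@gpower_rel L m).
Proof.
move=> u v; rewrite /gpower_rel eq_sym.
case: (v != u) => //=; apply/idP/idP; apply: walkle_sym; exact: sadj_sym.
Qed.
Lemma gpower_irr L m : irreflexive (@gpower_rel L m).
Proof. by move=> u; rewrite /gpower_rel eqxx. Qed.
Definition gpower (L : sgraph) (m : nat) : sgraph :=
  SGraph (@gpower_sym L m) (@gpower_irr L m).

Definition maxdeg_le (G : sgraph) (k : nat) : Prop :=
  forall v : G, #|[set u : G | sadj v u]| <= k.

Definition induced_rel (G : sgraph) (S : {set G}) : rel G :=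
  fun x y => [&& sadj x y, x \in S & y \in S].

Definition connected_set (G : sgraph) (S : {set G}) : Prop :=
  S != set0 /\ forall x y, x \in S -> y \in S -> connect (induced_rel S) x y.

Definition acyclic (T : sgraph) : Prop :=
  forall p : seq T, uniq p -> 3 <= size p -> ~~ cycle (@sadj T) p.
Definition is_tree (T : sgraph) : Prop :=
  connected_set [set: T] /\ acyclic T.

Definition tw_le (G : sgraph) (t : nat) : Prop :=
  exists (T : sgraph) (B : T -> {set G}),
    [/\ is_tree T,
        forall v : G, exists x : T, v \in B x,
        forall u v : G, sadj u v -> exists x : T, (u \in B x) && (v \in B x),
        forall v : G, connected_set [set x : T | v \in B x]
      & forall x : T, #|B x| <= t.+1].

Definition contained (G G' : sgraph) : Prop :=
  exists f : G -> G', injective f /\ forall x y, sadj x y -> sadj (f x) (f y).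

Definition is_model (G G' : sgraph) (mu : G -> {set G'}) : Prop :=
  [/\ forall v, connected_set (mu v),
      forall v w, v != w -> [disjoint mu v & mu w]
    & forall v w, sadj v w ->
        exists x y, [/\ x \in mu v, y \in mu w & sadj x y]].

Definition shallow_minor (r : nat) (G G' : sgraph) : Prop :=
  exists mu : G -> {set G'}, is_model mu /\
    forall v, exists2 c, c \in mu v &
      forall x, x \in mu v -> walkle (induced_rel (mu v)) r c x.

(* Root a tree decomposition (T, B) of H of width t and order V(H) by [key], the depth of
   the highest bag containing a vertex.  Project each branch set mu v onto H; its shadow is
   connected, and its least vertex, the anchor of v, is joined to every vertex of the shadow
   by a walk of length at most 2r in the graph of pairs of vertices sharing a bag, on which
   the anchor is the least vertex.  Such a vertex is weakly 2r-reachable from any bag meeting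
   the shadow, and from a bag of size t+1 at most C(2r+1+t, t) vertices are weakly
   2r-reachable (shortcut weak-reachability walks into descending ones, then count the
   descending walks by induction on the bag size).  So replacing every bag B x by the anchors
   of the shadows meeting it is a tree decomposition of width C(2r+1+t, t) - 1 of the graph J
   of anchors.  Finally v maps to (anchor v, L-coordinate of the centre of mu v, index): the
   centres of adjacent branch sets are within distance 2r+1 in L, and the branch sets with a
   common anchor and a common L-centre are separated by the L- and K_l-coordinates of their
   points above the anchor, which range over a ball of radius r of L times K_l. *)

From mathcomp Require Import all_boot zify.
Set Implicit Arguments. Unset Strict Implicit. Unset Printing Implicit Defensive.

(** * Walks of bounded length *)

Section Walks.
Variables (T : finType) (e : rel T).

Lemma walkle_refl m x : walkle e m x x.
Proof. by elim: m => [|m IH] /=; rewrite ?eqxx ?IH. Qed.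

Lemma walkle_leq m n u v : m <= n -> walkle e m u v -> walkle e n u v.
Proof.
move=> /subnK <-; elim: (n - m) => [|d IH] h //.
by rewrite addSn; apply/walkle_mono/IH.
Qed.

Lemma walkle1 u v : e u v -> walkle e 1 u v.
Proof. exact: (walkle_snoc (m := 0) (eqxx u)). Qed.

Lemma walkleS m u v :
  walkle e m.+1 u v = (u == v) || [exists w, e u w && walkle e m w v].
Proof.
elim: m u => [|m IH] u //.
rewrite -[LHS]/(walkle e m.+1 u v || [exists w, e u w && walkle e m.+1 w v]).
rewrite IH -orbA; congr (_ || _).
apply/orP/existsP => [[] /existsP [w /andP [euw hw]]|[w /andP [euw]]].
- by exists w; rewrite euw walkle_mono.
- by exists w; rewrite euw.
- by move=> hw; right; apply/existsP; exists w; rewrite euw.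
Qed.

Lemma walkle_cat m n u w v :
  walkle e m u w -> walkle e n w v -> walkle e (m + n) u v.
Proof.
elim: m u => [|m IH] u; first by move=> /eqP ->; rewrite add0n.
rewrite walkleS => /orP [/eqP -> hv|/existsP [x /andP [eux hx]] hv].
  exact: walkle_leq (leq_addl _ _) hv.
by rewrite addSn walkleS; apply/orP; right; apply/existsP; exists x; rewrite eux (IH _ hx hv).
Qed.

Lemma walkle_connect m u v : walkle e m u v -> connect e u v.
Proof.
elim: m u => [|m IH] u; first by move=> /eqP ->.
rewrite walkleS => /orP [/eqP ->|/existsP [x /andP [eux hx]]] //.
exact: connect_trans (connect1 eux) (IH _ hx).
Qed.

Lemma connect_walkle u v : connect e u v -> exists m, walkle e m u v.
Proof.
case/connectP=> p; elim: p u => [|x p IH] u /=.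
  by move=> _ ->; exists 0; apply: walkle_refl.
case/andP=> eux hp hl; have [m hm] := IH _ hp hl; exists m.+1.
by rewrite walkleS; apply/orP; right; apply/existsP; exists x; rewrite eux.
Qed.

Lemma walkle_nonincr (f : T -> nat) m u v :
  (forall x y, e x y -> f y <= f x) -> walkle e m u v -> f v <= f u.
Proof.
move=> hf; elim: m u => [|m IH] u; first by move=> /eqP ->.
rewrite walkleS => /orP [/eqP -> //|/existsP [x /andP [eux hx]]].
exact: leq_trans (IH _ hx) (hf _ _ eux).
Qed.

End Walks.

Section WalkMap.
Variables (T T' : finType) (e : rel T) (e' : rel T') (f : T -> T').
Hypothesis f_homo : forall x y, e x y -> (f x == f y) || e' (f x) (f y).

Lemma walkle_map m u v : walkle e m u v -> walkle e' m (f u) (f v).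
Proof.
elim: m u => [|m IH] u; first by move=> /eqP ->; apply: walkle_refl.
rewrite !walkleS => /orP [/eqP ->|/existsP [x /andP [eux hx]]]; first by rewrite eqxx.
case/orP: (f_homo eux) => [/eqP ->|efx]; first by rewrite -walkleS walkle_mono ?IH.
by apply/orP; right; apply/existsP; exists (f x); rewrite efx IH.
Qed.

End WalkMap.

Lemma sub_walkle (T : finType) (e e' : rel T) m u v :
  subrel e e' -> walkle e m u v -> walkle e' m u v.
Proof. by move=> sub; apply: (walkle_map (f := id)) => x y /sub ->; rewrite orbT. Qed.

Section Graphs.
Implicit Types G A C : sgraph.

Lemma sadj_neq G (x y : G) : sadj x y -> x != y.
Proof. by apply: contraTneq => ->; rewrite sadj_irr. Qed.

Definition adj_or_eq G (x y : G) := (x == y) || sadj x y.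

Definition weak_hom G G' (f : G -> G') := forall x y, sadj x y -> adj_or_eq (f x) (f y).

Lemma weak_hom_comp G1 G2 G3 (f : G1 -> G2) (g : G2 -> G3) :
  weak_hom f -> weak_hom g -> weak_hom (g \o f).
Proof. by move=> hf hg x y /hf /orP [/eqP /= ->|/hg]; rewrite /adj_or_eq ?eqxx. Qed.

Lemma sprod_adjE A C (x y : sprod A C) :
  sadj x y = [&& x != y, adj_or_eq x.1 y.1 & adj_or_eq x.2 y.2].
Proof.
case: x y => [a c] [a' c']; rewrite /= /sprod_rel /adj_or_eq xpair_eqE /=.
case: (eqVneq a a') => [<-|_]; case: (eqVneq c c') => [<-|_];
  by rewrite ?sadj_irr ?andbF ?andbT ?orbF.
Qed.

Lemma adj_or_eq_sprod A C (x y : sprod A C) :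
  adj_or_eq x y = adj_or_eq x.1 y.1 && adj_or_eq x.2 y.2.
Proof.
rewrite {1}/adj_or_eq sprod_adjE; case: (eqVneq x y) => [->|//].
by rewrite /adj_or_eq !eqxx.
Qed.

Lemma adj_or_eq_Kn n (x y : Kn n) : adj_or_eq x y.
Proof. by rewrite /adj_or_eq /= /Kn_rel orbN. Qed.

Lemma adj_or_eq_gpower (L : sgraph) m (x y : L) :
  walkle (@sadj L) m x y -> @adj_or_eq (gpower L m) x y.
Proof. by rewrite /adj_or_eq /= /gpower_rel => ->; rewrite andbT orbN. Qed.

Lemma weak_hom_fst A C : weak_hom (fun x : sprod A C => x.1).
Proof. by move=> x y; rewrite sprod_adjE => /and3P []. Qed.

Lemma weak_hom_snd A C : weak_hom (fun x : sprod A C => x.2).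
Proof. by move=> x y; rewrite sprod_adjE => /and3P []. Qed.

Lemma walkle_weak_hom G G' (f : G -> G') m x y :
  weak_hom f -> walkle (@sadj G) m x y -> walkle (@sadj G') m (f x) (f y).
Proof. by move=> hf; apply: walkle_map. Qed.

Lemma induced_rel_sym G (S : {set G}) : symmetric (induced_rel S).
Proof. by move=> x y; rewrite /induced_rel sadj_sym [(x \in S) && _]andbC. Qed.

Lemma induced_rel_sub G (S : {set G}) : subrel (induced_rel S) (@sadj G).
Proof. by move=> x y /and3P []. Qed.

Lemma induced_rel_subset G (S S' : {set G}) :
  S \subset S' -> subrel (induced_rel S) (induced_rel S').
Proof.
by move=> /subsetP sub x y /and3P [exy xS yS]; rewrite /induced_rel exy !sub.
Qed.

Lemma walkle_induced_imset G G' (f : G -> G') (S : {set G}) m x y :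
  weak_hom f -> walkle (induced_rel S) m x y ->
  walkle (induced_rel (f @: S)) m (f x) (f y).
Proof.
move=> hf; apply: walkle_map => u w /and3P [/hf /orP [->//|euw] uS wS].
by rewrite /induced_rel euw !imset_f ?orbT.
Qed.

Lemma connected_imset G G' (f : G -> G') (S : {set G}) :
  weak_hom f -> connected_set S -> connected_set (f @: S).
Proof.
move=> hf [/set0Pn [x xS] cS]; split; first by apply/set0Pn; exists (f x); rewrite imset_f.
move=> _ _ /imsetP [u uS ->] /imsetP [w wS ->].
have [m /(walkle_induced_imset hf) /walkle_connect //] := connect_walkle (cS _ _ uS wS).
Qed.

Lemma connected_bigcup G (I : finType) (P : pred I) (X : I -> {set G}) z :
  (exists i, P i) -> (forall i, P i -> connected_set (X i)) ->
  (forall i, P i -> z \in X i) -> connected_set (\bigcup_(i | P i) X i).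
Proof.
move=> [i0 Pi0] cX zX; split.
  by apply/set0Pn; exists z; apply/bigcupP; exists i0; last exact: zX.
have to_z x : x \in \bigcup_(i | P i) X i ->
    connect (induced_rel (\bigcup_(i | P i) X i)) x z.
  case/bigcupP=> i Pi xX; have [_ /(_ _ _ xX (zX _ Pi)) cxz] := cX _ Pi.
  by apply: connect_sub cxz => u w /(induced_rel_subset (bigcup_sup _ Pi)) /connect1.
move=> x y /to_z cxz /to_z cyz; apply: connect_trans cxz _.
by rewrite (sym_connect_sym (@induced_rel_sym _ _)).
Qed.

Lemma card_ball L r k x : maxdeg_le (gpower L r) k ->
  #|[set y | walkle (@sadj L) r x y]| <= k.+1.
Proof.
move=> hdeg; apply: leq_trans (_ : #|x |: [set y | @sadj (gpower L r) x y]| <= _).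
  apply/subset_leq_card/subsetP => y; rewrite !inE /= /gpower_rel => hy.
  by rewrite hy andbT eq_sym orbN.
by rewrite -addn1 addnC; apply: leq_trans (leq_card_setU _ _) _; rewrite cards1 leq_add2l.
Qed.

End Graphs.

(** * Rooted trees *)

Lemma path_map_iota (T : Type) (e : rel T) (f : nat -> T) n :
  (forall i, i < n -> e (f i) (f i.+1)) -> path e (f 0) [seq f i | i <- iota 1 n].
Proof.
elim: n f => [|n IH] f hf //=; rewrite hf // -[2]/(1 + 1) iotaDl -map_comp.
by apply: (IH (fun i => f i.+1)) => i hi; apply: hf.
Qed.

Lemma last_map_iota (T : Type) (f : nat -> T) n :
  last (f 0) [seq f i | i <- iota 1 n] = f n.
Proof.
elim: n f => [|n IH] f //=; rewrite -[2]/(1 + 1) iotaDl -map_comp.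
exact: (IH (fun i => f i.+1)).
Qed.

Section RootedTree.
Variable T : sgraph.
Hypothesis T_connected : forall x y : T, connect (@sadj T) x y.
Variable rho : T.

Local Notation walkle := (walkle (@sadj T)).

Lemma ex_walkle_root x : exists m, walkle m rho x.
Proof. exact: connect_walkle (T_connected rho x). Qed.

Definition depth x := ex_minn (ex_walkle_root x).

Lemma depth_walkle x : walkle (depth x) rho x.
Proof. by rewrite /depth; case: ex_minnP. Qed.

Lemma depth_min x m : walkle m rho x -> depth x <= m.
Proof. by rewrite /depth; case: ex_minnP => n _ h /h. Qed.

Lemma depth_rho : depth rho = 0.
Proof. by apply/eqP; rewrite -leqn0 depth_min ?walkle_refl. Qed.

Lemma depth0 x : depth x = 0 -> x = rho.
Proof. by move=> h; have := depth_walkle x; rewrite h => /eqP. Qed.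

Lemma depth_adj x y : sadj x y -> depth y <= (depth x).+1.
Proof. by move=> h; apply/depth_min/(walkle_snoc (depth_walkle x) h). Qed.

Lemma ex_parent x : x != rho -> exists y, sadj x y && ((depth y).+1 == depth x).
Proof.
move=> nx; case E: (depth x) => [|m]; first by rewrite (depth0 E) eqxx in nx.
have := walkle_sym (@sadj_sym T) (depth_walkle x); rewrite E walkleS (negbTE nx).
case/existsP=> y /andP [exy /(walkle_sym (@sadj_sym T)) /depth_min hy].
by exists y; rewrite exy eqSS eqn_leq hy -ltnS -E depth_adj // sadj_sym.
Qed.

Definition parent x := odflt rho [pick y | sadj x y && ((depth y).+1 == depth x)].

Lemma parent_spec x : x != rho -> sadj x (parent x) /\ (depth (parent x)).+1 = depth x.
Proof.
move=> nx; rewrite /parent; case: pickP => [y /andP [h1 /eqP h2] //|].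
by have [y hy] := ex_parent nx => /(_ y); rewrite hy.
Qed.

Lemma parent_rho : parent rho = rho.
Proof. by rewrite /parent; case: pickP => [y /andP [_]|] //=; rewrite depth_rho. Qed.

Lemma depth_parent x : depth (parent x) = (depth x).-1.
Proof.
case: (eqVneq x rho) => [->|nx]; first by rewrite parent_rho depth_rho.
by have [_ <-] := parent_spec nx.
Qed.

Definition anc x i := iter i parent x.

Lemma ancS x i : anc x i.+1 = parent (anc x i).
Proof. by []. Qed.

Lemma ancSr x i : anc x i.+1 = anc (parent x) i.
Proof. by rewrite /anc iterSr. Qed.

Lemma anc_add x i j : anc (anc x i) j = anc x (j + i).
Proof. by rewrite /anc iterD. Qed.

Lemma depth_anc x i : depth (anc x i) = depth x - i.
Proof. by elim: i => [|i IH]; rewrite ?subn0 //= depth_parent IH; lia. Qed.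

Lemma anc_depth x : anc x (depth x) = rho.
Proof. by apply: depth0; rewrite depth_anc subnn. Qed.

Lemma adj_anc x i : i < depth x -> sadj (anc x i) (anc x i.+1).
Proof.
move=> lt; have nr : anc x i != rho.
  by apply/eqP => E; have := depth_anc x i; rewrite E depth_rho; lia.
by case: (parent_spec nr).
Qed.

Definition ancestor x y := exists i, anc y i = x.

Lemma ancestor_refl x : ancestor x x.
Proof. by exists 0. Qed.

Lemma ancestor_trans x y z : ancestor x y -> ancestor y z -> ancestor x z.
Proof. by move=> [i <-] [j <-]; exists (i + j); rewrite anc_add. Qed.

Lemma ancestor_depth x y : ancestor x y -> depth x <= depth y.
Proof. by move=> [i <-]; rewrite depth_anc leq_subr. Qed.

Lemma ancestor_by_depth x y z : ancestor x z -> ancestor y z ->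
  depth x <= depth y -> ancestor x y.
Proof.
move=> [i <-] [j <-]; rewrite !depth_anc => le.
case: (leqP j i) => ji; first by exists (i - j); rewrite anc_add subnK.
have [-> ->] : anc z i = rho /\ anc z j = rho by split; apply: depth0; rewrite depth_anc; lia.
exact: ancestor_refl.
Qed.

Hypothesis T_acyclic : acyclic T.

Lemma ex_meet_index a b : depth a = depth b -> exists i, anc a i == anc b i.
Proof. by move=> eab; exists (depth a); rewrite {2}eab !anc_depth. Qed.

Section PathViaLca.
Variables a b : T.
Hypotheses (a_neq_b : a != b) (depth_ab : depth a = depth b).

Let i0 := ex_minn (ex_meet_index depth_ab).

Let meet : anc a i0 = anc b i0.
Proof. by rewrite /i0; case: ex_minnP => i /eqP. Qed.

Let i0_min n : anc a n = anc b n -> i0 <= n.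
Proof. by rewrite /i0; case: ex_minnP => i _ h /eqP /h. Qed.

Let i0_le : i0 <= depth a.
Proof. by apply: i0_min; rewrite {2}depth_ab !anc_depth. Qed.

Let i0_gt0 : 0 < i0.
Proof. by case: (posnP i0) meet => // -> /= E; move: a_neq_b; rewrite E eqxx. Qed.

(* Up from a to the lowest common ancestor at step i0, then down to b. *)
Let h i := if i <= i0 then anc a i else anc b (i0.*2 - i).

Let hl i : i <= i0 -> h i = anc a i.
Proof. by move=> le; rewrite /h le. Qed.

Let hr i : i0 <= i -> h i = anc b (i0.*2 - i).
Proof.
move=> le; rewrite /h; case: leqP => // le2; have -> : i = i0 by lia.
by rewrite meet; congr anc; lia.
Qed.

Let depth_h i : i <= i0.*2 -> depth (h i) = depth a - minn i (i0.*2 - i).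
Proof.
move=> le; case: (leqP i i0) => c; first by rewrite hl // depth_anc; congr (_ - _); lia.
by rewrite hr ?depth_anc -?depth_ab; [congr (_ - _)|]; lia.
Qed.

Let h_inj (i j : nat) : i <= i0.*2 -> j <= i0.*2 -> h i = h j -> i = j.
Proof.
move=> ilt jlt eh; have emin : minn i (i0.*2 - i) = minn j (i0.*2 - j).
  by have := depth_h ilt; have := depth_h jlt; rewrite eh; lia.
case: (leqP i i0) => ci; case: (leqP j i0) => cj; try lia.
- have : anc a i = anc b i by rewrite -hl // eh hr; [congr anc|]; lia.
  by move/i0_min; lia.
- have : anc a j = anc b j by rewrite -hl // -eh hr; [congr anc|]; lia.
  by move/i0_min; lia.
Qed.

Lemma path_via_lca : exists p : seq T,
  [/\ uniq (a :: p), path (@sadj T) a p, last a p = b,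
      2 <= size p & forall y, y \in a :: p -> depth y <= depth a].
Proof.
have h0 : h 0 = a by rewrite hl.
have hseq : a :: [seq h i | i <- iota 1 i0.*2] = [seq h i | i <- iota 0 i0.*2.+1].
  by rewrite -{1}h0.
exists [seq h i | i <- iota 1 i0.*2]; split.
- rewrite hseq map_inj_in_uniq ?iota_uniq // => i j.
  by rewrite !mem_iota !add0n !ltnS; apply: h_inj.
- rewrite -{1}h0; apply: path_map_iota => i lt; case: (ltnP i i0) => c.
    by rewrite !hl ?(ltnW c) //; apply: adj_anc; lia.
  rewrite !hr 1?sadj_sym; try lia.
  have -> : i0.*2 - i = (i0.*2 - i.+1).+1 by lia.
  by apply: adj_anc; rewrite -depth_ab; lia.
- by rewrite -{1}h0 last_map_iota hr ?subnn //; lia.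
- by rewrite size_map size_iota; lia.
- by move=> y; rewrite hseq => /mapP [i]; rewrite mem_iota => lt ->; rewrite depth_h; lia.
Qed.

End PathViaLca.

Lemma depth_adj_neq x y : sadj x y -> depth x != depth y.
Proof.
move=> exy; apply/negP => /eqP E.
have [p [uniq_p path_p last_p size_p _]] := path_via_lca (sadj_neq exy) E.
have size_xp : 3 <= size (x :: p) by [].
by move: (T_acyclic uniq_p size_xp); rewrite /= rcons_path path_p last_p -(sadj_sym x) exy.
Qed.

Lemma parent_unique x y : sadj x y -> (depth y).+1 = depth x -> y = parent x.
Proof.
move=> exy Ey; have nx : x != rho by apply: contra_eqN Ey => /eqP ->; rewrite depth_rho.
have [exp Ep] := parent_spec nx; apply/eqP; apply: contraT => ny.
have Eyp : depth y = depth (parent x) by apply: succn_inj; rewrite Ey Ep.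
have [p [uniq_p path_p last_p size_p depth_p]] := path_via_lca ny Eyp.
have x_notin : x \notin y :: p by apply/negP => /depth_p; rewrite -ltnS Ey ltnn.
have uniq_xp : uniq (x :: y :: p) by rewrite cons_uniq x_notin.
have size_xp : 3 <= size (x :: y :: p) by rewrite /= ltnS ltnW.
by move: (T_acyclic uniq_xp size_xp); rewrite /= rcons_path exy path_p last_p -(sadj_sym x) exp.
Qed.

Lemma edge_parent x y : sadj x y ->
  (x != rho /\ y = parent x) \/ (y != rho /\ x = parent y).
Proof.
move=> exy; have eyx : sadj y x by rewrite sadj_sym.
have d1 := depth_adj exy; have d2 := depth_adj eyx.
case: (ltngtP (depth x) (depth y)) (depth_adj_neq exy) => // c _; [right | left]; split.
- by apply: contraTneq c => ->; rewrite depth_rho.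
- by apply: parent_unique; lia.
- by apply: contraTneq c => ->; rewrite depth_rho.
- by apply: parent_unique; lia.
Qed.

Lemma connect_ancestor (S : {set T}) u y : u \in S -> (u = rho \/ parent u \notin S) ->
  connect (induced_rel S) u y -> ancestor u y.
Proof.
move=> uS u_root /connectP [p + ->{y}].
elim/last_ind: p => [|p w IH]; first by move=> _; apply: ancestor_refl.
rewrite rcons_path last_rcons; set z := last u p => /andP [/IH anc_z /and3P [e _ wS]].
case: (edge_parent e) => [[nz wz]|[_ zw]]; last first.
  by apply: ancestor_trans anc_z _; exists 1; apply/esym.
case: anc_z => -[|i] /= zu; last by exists i; rewrite wz -ancSr.
by move: nz wS; rewrite wz /z zu; case: u_root => [->|/negP npu _ /npu]; rewrite ?eqxx.
Qed.

Definition top (S : {set T}) : T :=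
  if [pick x in S] is Some x0 then [arg min_(x < x0 in S) depth x] else rho.

Section TopOfConnectedSet.
Variable S : {set T}.
Hypothesis S_connected : connected_set S.

Lemma top_spec : top S \in S /\ forall y, y \in S -> depth (top S) <= depth y.
Proof.
rewrite /top; case: pickP => [x0 x0S|]; first by case: arg_minnP.
by case: S_connected => /set0Pn [x xS] _ /(_ x); rewrite xS.
Qed.

Lemma top_in : top S \in S.
Proof. by case: top_spec. Qed.

Lemma top_min y : y \in S -> depth (top S) <= depth y.
Proof. by case: top_spec => _; apply. Qed.

Lemma top_ancestor y : y \in S -> ancestor (top S) y.
Proof.
move=> yS; apply: connect_ancestor top_in _ (S_connected.2 _ _ top_in yS).
case: (eqVneq (top S) rho) => [|nr]; [by left | right].
by apply/negP => /top_min; have [_ <-] := parent_spec nr; rewrite ltnn.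
Qed.

Let anc_below_top_in y m i : y \in S -> anc y m = top S -> i <= m -> anc y i \in S.
Proof.
move=> yS top_m; elim: i => [//|i IH] lt; have yiS := IH (ltnW lt).
case: (eqVneq (anc y i) rho) => [E|nr]; first by rewrite ancS E parent_rho -E.
apply: contraT => npar.
have := connect_ancestor yiS (or_intror npar) (S_connected.2 _ _ yiS top_in).
move/ancestor_depth; rewrite -top_m !depth_anc => le.
have : depth (anc y i) = 0 by rewrite depth_anc; lia.
by move/depth0 => E; rewrite E eqxx in nr.
Qed.

Lemma ancestor_in x y : y \in S -> ancestor x y -> depth (top S) <= depth x -> x \in S.
Proof.
move=> yS [i <-{x}] le; have [m top_m] := top_ancestor yS.
case: (leqP i m) => im; first exact: anc_below_top_in top_m im.
move: le; rewrite -top_m !depth_anc => le.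
have [-> ym] : anc y i = rho /\ anc y m = rho by split; apply: depth0; rewrite depth_anc; lia.
by rewrite -ym top_m top_in.
Qed.

End TopOfConnectedSet.

End RootedTree.

(** * Weak reachability in tree decompositions *)

Lemma hockey_stick s n : \sum_(0 <= i < n.+1) 'C(s + i, i) = 'C(s + n.+1, n).
Proof.
elim: n => [|n IH]; first by rewrite big_nat1 !bin0.
by rewrite big_nat_recr //= IH [s + n.+2]addnS binS addnC.
Qed.

Definition binsum s b m := \sum_(b - m <= i < b) 'C(s + i, i).

Lemma binsum_leq s b m m' : m <= m' -> binsum s b m <= binsum s b m'.
Proof.
by move=> le; rewrite /binsum (@big_cat_nat _ _ _ (b - m) (b - m') b) ?leq_addl //; lia.
Qed.

Lemma binsumS s b m : 0 < m -> m <= b.+1 ->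
  binsum s b.+1 m = binsum s b m.-1 + 'C(s + b, b).
Proof.
move=> m_gt0 le; rewrite /binsum big_nat_recr /=; last lia.
by rewrite (_ : b.+1 - m = b - m.-1) //; lia.
Qed.

Lemma binsum_full s b : binsum s b.+1 b.+1 = 'C(s + b.+1, b).
Proof. by rewrite /binsum subnn hockey_stick. Qed.

Lemma binsum_pred s b : (binsum s b.+1 b).+1 = 'C(s.+1 + b, b).
Proof.
rewrite addSnnS -hockey_stick (@big_cat_nat _ _ _ 1) //= big_nat1 bin0 add1n.
by rewrite /binsum subSn // subnn.
Qed.

Section TreeDecomposition.
Variables (H T : sgraph) (B : T -> {set H}).
Hypothesis T_connected : forall x y : T, connect (@sadj T) x y.
Hypothesis T_acyclic : acyclic T.
Variable rho : T.
Hypothesis B_connected : forall v : H, connected_set [set x | v \in B x].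

Local Notation depth := (depth T_connected rho).
Local Notation ancestor := (ancestor T_connected rho).

Definition home (h : H) := top T_connected rho [set x | h \in B x].

Lemma home_in h : h \in B (home h).
Proof. by have := top_in T_connected rho (B_connected h); rewrite inE. Qed.

Lemma home_ancestor h y : h \in B y -> ancestor (home h) y.
Proof.
by move=> hy; apply: (top_ancestor T_connected rho T_acyclic (B_connected h)); rewrite inE.
Qed.

Lemma mem_bag_between h x y : h \in B y -> ancestor x y -> depth (home h) <= depth x -> h \in B x.
Proof.
by move=> hy xy le; have := ancestor_in T_acyclic (B_connected h) _ xy le; rewrite !inE; apply.
Qed.

Definition key (h : H) := depth (home h) * #|H| + enum_rank h.

Lemma key_depth a b : key a <= key b -> depth (home a) <= depth (home b).
Proof.
have n_gt0 : 0 < #|H| by apply: leq_ltn_trans (ltn_ord (enum_rank a)).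
move=> /(leq_div2r #|H|); rewrite /key !divnMDl // !divn_small ?addn0 //; exact: ltn_ord.
Qed.

Lemma key_inj : injective key.
Proof.
move=> a b E; have Ed : depth (home a) = depth (home b).
  by apply/eqP; rewrite eqn_leq !key_depth // E.
by move: E; rewrite /key Ed => /addnI /val_inj /enum_rank_inj.
Qed.

Lemma mem_ancestor_bag p y z u : z \in B p -> u \in B y -> key z <= key u ->
  ancestor y p -> z \in B y.
Proof.
move=> zB uB le yp; apply: mem_bag_between zB yp _.
exact: leq_trans (key_depth le) (ancestor_depth (home_ancestor uB)).
Qed.

(* [cobag] is a chordal supergraph of H, with [key] as a perfect elimination order: the
   lower neighbours of u all lie in the bag [home u]. *)
Definition cobag (a b : H) := (a != b) && [exists x, (a \in B x) && (b \in B x)].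

Lemma cobag_sym : symmetric cobag.
Proof.
move=> a b; rewrite /cobag eq_sym; congr (_ && _).
by apply/existsP/existsP => -[x]; exists x; rewrite andbC.
Qed.

Definition above th := [set u : H | th <= key u].

Definition descent th : rel H := fun u w => [&& cobag u w, key w < key u & th <= key w].

Lemma descent_home th u w : descent th u w -> w \in B (home u).
Proof.
case/and3P=> /andP [_ /existsP [x /andP [ux wx]]] lt _.
exact: mem_bag_between wx (home_ancestor ux) (key_depth (ltnW lt)).
Qed.

Definition reach th s (K : {set H}) := [set a | [exists h in K, walkle (descent th) s h a]].

Lemma reach_set0 th s : reach th s set0 = set0.
Proof. by apply/setP => a; rewrite !inE; apply/existsP => -[h]; rewrite inE. Qed.

Lemma reach0_set1 th z : reach th 0 [set z] = [set z].
Proof.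
apply/setP => a; rewrite !inE; apply/existsP/idP => [[h /andP [/set1P -> /eqP ->]]|/eqP ->].
  by rewrite eqxx.
by exists z; rewrite inE eqxx walkle_refl.
Qed.

Lemma reachS_set1 th s z :
  reach th s.+1 [set z] \subset z |: reach th s [set w | descent th z w].
Proof.
apply/subsetP => a; rewrite !inE => /existsP [h /andP [/set1P ->]].
rewrite walkleS => /orP [/eqP ->|/existsP [w /andP [zw wa]]]; first by rewrite eqxx.
by apply/orP; right; apply/existsP; exists w; rewrite inE zw.
Qed.

Lemma descent_via_min th p z h w : z \in B p -> ancestor (home h) p ->
  key z <= key h -> descent th h w -> key w < key z -> descent th z w.
Proof.
move=> zB hp le hw lt; move: (hw) => /and3P [_ _ thw].
rewrite /descent lt thw !andbT cobag_sym /cobag.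
apply/andP; split; first by apply: contraTneq lt => ->; rewrite ltnn.
apply/existsP; exists (home z); rewrite home_in andbT.
apply: mem_bag_between (descent_home hw) _ (key_depth (ltnW lt)).
exact: ancestor_by_depth (home_ancestor zB) hp (key_depth le).
Qed.

Lemma descent_walk_split th p z s h a : z \in B p -> ancestor (home h) p -> key z <= key h ->
  walkle (descent th) s h a -> walkle (descent (key z).+1) s h a || walkle (descent th) s z a.
Proof.
move=> zB; elim: s h => [|s IH] h hp le; first by move=> /= ->.
rewrite walkleS => /orP [/eqP ->|/existsP [w /andP [hw wa]]]; first by rewrite walkle_refl.
case: (ltngtP (key w) (key z)) => c.
- apply/orP; right; rewrite walkleS; apply/orP; right; apply/existsP; exists w.
  by rewrite (descent_via_min zB hp le hw c).
- have wp : ancestor (home w) p := ancestor_trans (home_ancestor (descent_home hw)) hp.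
  case/orP: (IH w wp (ltnW c) wa) => [wa'|za]; last by rewrite (walkle_mono za) orbT.
  apply/orP; left; rewrite walkleS; apply/orP; right; apply/existsP; exists w.
  by case/and3P: hw => hw1 hw2 _; rewrite /descent hw1 hw2 c wa'.
- by move/key_inj: c => wz; rewrite -wz (walkle_mono wa) orbT.
Qed.

Lemma reach_split th p (K : {set H}) z s : z \in K -> {in K, forall u, key z <= key u} ->
  K \subset B p :&: above th ->
  reach th s K \subset reach (key z).+1 s (K :\ z) :|: reach th s [set z].
Proof.
move=> zK zmin KB; have zB : z \in B p by have := subsetP KB z zK; rewrite inE => /andP [].
apply/subsetP => a; rewrite !inE => /existsP [h /andP [hK ha]].
have hp : ancestor (home h) p.
  by apply: home_ancestor; have := subsetP KB h hK; rewrite inE => /andP [].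
case: (eqVneq h z) => [hz|nhz].
  by apply/orP; right; apply/existsP; exists z; rewrite inE eqxx -hz.
case/orP: (descent_walk_split zB hp (zmin h hK) ha) => [ha'|za]; apply/orP; [left|right].
  by apply/existsP; exists h; rewrite !inE nhz hK.
by apply/existsP; exists z; rewrite inE eqxx.
Qed.

Definition bounded_above th p b := forall y, ancestor y p -> #|B y :&: above th| <= b.

Lemma bounded_above_succ th p b z : z \in B p -> th <= key z ->
  bounded_above th p b.+1 -> bounded_above (key z).+1 p b.
Proof.
move=> zB zth bnd y yp; case: (set_0Vmem (B y :&: above (key z).+1)) => [->|[u]].
  by rewrite cards0.
rewrite !inE => /andP [uB ltzu]; have zy := mem_ancestor_bag zB uB (ltnW ltzu) yp.
have := bnd y yp; rewrite (cardsD1 z) !inE zy zth ltnS; apply: leq_trans.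
apply/subset_leq_card/subsetP => w; rewrite !inE => /andP [wB ltzw].
by rewrite wB (leq_trans zth (ltnW ltzw)) !andbT; apply: contraTneq ltzw => ->; rewrite ltnn.
Qed.

Definition reach_bound b s := forall th p (K : {set H}),
  bounded_above th p b -> K \subset B p :&: above th -> #|reach th s K| <= binsum s b #|K|.

Lemma reach_bound0 s : reach_bound 0 s.
Proof.
move=> th p K bnd KB; suff -> : K = set0 by rewrite reach_set0 cards0.
apply/eqP; rewrite -cards_eq0 -leqn0.
exact: leq_trans (subset_leq_card KB) (bnd _ (ancestor_refl _ _ _)).
Qed.

Lemma reach_bound_succ b s : reach_bound b s ->
  (forall th p z, bounded_above th p b.+1 -> z \in B p :&: above th ->
     #|reach th s [set z]| <= 'C(s + b, b)) ->
  reach_bound b.+1 s.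
Proof.
move=> IHb bnd1 th p K bnd KB; case: (set_0Vmem K) => [->|[z0 z0K]].
  by rewrite reach_set0 cards0.
pose z := [arg min_(u < z0 in K) key u].
have [zK zmin] : z \in K /\ {in K, forall u, key z <= key u} by rewrite /z; case: arg_minnP.
have /andP [zB zth] : (z \in B p) && (th <= key z) by have := subsetP KB z zK; rewrite !inE.
rewrite binsumS ?card_gt0; first last.
- exact: leq_trans (subset_leq_card KB) (bnd _ (ancestor_refl _ _ _)).
- by apply/set0Pn; exists z.
apply: leq_trans (subset_leq_card (reach_split s zK zmin KB)) _.
apply: leq_trans (leq_card_setU _ _) (leq_add _ (bnd1 _ _ _ bnd _)); last by rewrite inE zB inE.
rewrite (cardsD1 z K) zK; apply: IHb; first exact: bounded_above_succ zB zth bnd.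
apply/subsetP => u; rewrite !inE => /andP [nuz uK].
have := subsetP KB u uK; rewrite !inE => /andP [-> _] /=.
by rewrite ltn_neqAle zmin // andbT (inj_eq key_inj) eq_sym.
Qed.

Lemma reach_bound_set1 b s th p z : reach_bound b.+1 s -> bounded_above th p b.+1 ->
  z \in B p :&: above th -> #|reach th s.+1 [set z]| <= 'C(s.+1 + b, b).
Proof.
move=> IH bnd; rewrite !inE => /andP [zB zth]; set N := [set w | descent th z w].
have NB : N \subset B (home z) :&: above th.
  by apply/subsetP => w; rewrite !inE => /[dup] /descent_home -> /and3P [].
have bndN : bounded_above th (home z) b.+1.
  by move=> y yz; apply/bnd/(ancestor_trans yz)/home_ancestor.
have N_le : #|N| <= b.
  have zN : z \notin N by rewrite inE /descent ltnn andbF.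
  suff : #|z |: N| <= b.+1 by rewrite cardsU1 zN.
  apply: leq_trans (bndN _ (ancestor_refl _ _ _)); apply/subset_leq_card/subsetP => w.
  by rewrite in_setU1 => /orP [/eqP ->|/(subsetP NB) //]; rewrite !inE home_in.
apply: leq_trans (subset_leq_card (reachS_set1 th s z)) _.
rewrite -binsum_pred cardsU1; apply: leq_trans (leq_add (leq_b1 _) (IH _ _ _ bndN NB)) _.
by rewrite add1n ltnS binsum_leq.
Qed.

Lemma card_reach b s : reach_bound b s.
Proof.
elim: b s => [|b IHb] s; first exact: reach_bound0.
elim: s => [|s IHs]; apply: reach_bound_succ (IHb _) _ => th p z bnd zB.
  by rewrite reach0_set1 cards1 add0n binn.
exact: reach_bound_set1 IHs bnd zB.
Qed.

Lemma walkle_descent_key th s h a : walkle (descent th) s h a -> key a <= key h.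
Proof. by apply: walkle_nonincr => u w /and3P [_ /ltnW]. Qed.

Lemma descent_cobag th th' u w1 w2 : descent th u w1 -> descent th' u w2 -> w1 != w2 ->
  cobag w1 w2.
Proof.
move=> /descent_home w1B /descent_home w2B n12; rewrite /cobag n12.
by apply/existsP; exists (home u); rewrite w1B w2B.
Qed.

Definition wrel a : rel H := fun x y => [&& cobag x y, key a <= key x & key a <= key y].

Lemma walkle_descent_wrel th s h a : walkle (descent th) s h a -> walkle (wrel a) s h a.
Proof.
elim: s h => [//|s IH] h; rewrite !walkleS => /orP [->//|/existsP [w /andP [hw wa]]].
apply/orP; right; apply/existsP; exists w; rewrite IH // andbT.
case/and3P: (hw) => chw ltwh _; have kaw := walkle_descent_key wa.
by rewrite /wrel chw kaw (leq_trans kaw (ltnW ltwh)).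
Qed.

(* Two lower neighbours of a vertex share its home bag, so every local maximum of a walk can
   be cut out. *)
Lemma wrel_walk_descent s h a : key a <= key h -> walkle (wrel a) s h a ->
  walkle (descent 0) s h a.
Proof.
elim: s h a => [//|s IH] h a kah.
rewrite walkleS => /orP [/eqP ->|/existsP [p /andP [/and3P [hp _ kap] pa]]].
  exact: walkle_refl.
move/(IH _ _ kap): pa => pa; case: (ltngtP (key p) (key h)) => c.
- by rewrite walkleS; apply/orP; right; apply/existsP; exists p; rewrite /descent hp c pa.
- have ph : descent 0 p h by rewrite /descent cobag_sym hp c.
  case: s IH pa => [|s] IH; first by move=> /eqP pa; move: c; rewrite pa ltnNge kah.
  rewrite walkleS => /orP [/eqP pa|/existsP [q /andP [pq qa]]].
    by move: c; rewrite pa ltnNge kah.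
  apply: walkle_mono; case: (eqVneq h q) => [->|nhq]; first exact: walkle_mono.
  apply: IH => //; rewrite walkleS; apply/orP; right; apply/existsP; exists q.
  by rewrite /wrel (descent_cobag ph pq nhq) kah (walkle_descent_key qa) (walkle_descent_wrel qa).
- by move/key_inj: c hp => ->; rewrite /cobag eqxx.
Qed.

Definition wreach s (K : {set H}) := [set a | [exists h in K, walkle (wrel a) s h a]].

Lemma wrel_walk_key s h a : walkle (wrel a) s h a -> key a <= key h.
Proof.
case: s => [/eqP -> //|s]; rewrite walkleS.
by case/orP=> [/eqP -> //|/existsP [w /andP [/and3P [_ kah _] _]]].
Qed.

Lemma card_wreach_bag t s x : (forall y, #|B y| <= t.+1) ->
  #|wreach s (B x)| <= 'C(s + t.+1, t).
Proof.
move=> B_size; have sub : wreach s (B x) \subset reach 0 s (B x).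
  apply/subsetP => a; rewrite !inE => /existsP [h /andP [hx ha]]; apply/existsP; exists h.
  by rewrite hx (wrel_walk_descent (wrel_walk_key ha) ha).
apply: leq_trans (subset_leq_card sub) _; rewrite -binsum_full.
apply: leq_trans (binsum_leq _ _ (B_size x)); apply: (@card_reach t.+1 s 0 x).
- by move=> y _; apply: leq_trans (subset_leq_card (subsetIl _ _)) (B_size y).
- by apply/subsetP => h hx; rewrite !inE hx.
Qed.

End TreeDecomposition.

Section BagsMeetingConnectedSet.
Variables (H T : sgraph) (B : T -> {set H}).
Hypothesis B_cover : forall v : H, exists x : T, v \in B x.
Hypothesis B_edge : forall u v : H, sadj u v -> exists x : T, (u \in B x) && (v \in B x).
Hypothesis B_connected : forall v : H, connected_set [set x | v \in B x].
Variable S : {set H}.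

Let X := [set x | [exists h in S, h \in B x]].

Let connect_in_nodes h x y : h \in S -> h \in B x -> h \in B y -> connect (induced_rel X) x y.
Proof.
move=> hS hx hy; have [_ cB] := B_connected h.
have sub : [set x | h \in B x] \subset X.
  by apply/subsetP => z; rewrite !inE => hz; apply/existsP; exists h; rewrite hS.
apply: connect_sub (cB x y _ _) => [u w /(induced_rel_subset sub) /connect1 //||]; by rewrite inE.
Qed.

Lemma connected_bags_meeting : connected_set S -> connected_set X.
Proof.
case=> /set0Pn [h0 h0S] S_conn; split.
  have [x hx] := B_cover h0; apply/set0Pn; exists x.
  by rewrite inE; apply/existsP; exists h0; rewrite h0S.
move=> x1 x2; rewrite !inE => /existsP [h1 /andP [h1S h1x]] /existsP [h2 /andP [h2S h2x]].
case/connectP: (S_conn _ _ h1S h2S) => p + last_p.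
elim: p h1 x1 h1S h1x last_p => [|h p IH] h1 x1 h1S h1x.
  by move=> /= eh _; apply: connect_in_nodes h1S h1x _; rewrite -eh.
move=> /= last_p /andP [/and3P [e _ hS] hp].
have [x /andP [h1x' hx]] := B_edge e.
exact: connect_trans (connect_in_nodes h1S h1x h1x') (IH _ _ hS hx last_p hp).
Qed.

End BagsMeetingConnectedSet.

(** * The graph of anchors *)

Section ImageGraph.
Variables (G : sgraph) (V : finType) (j : G -> V).

Definition image_vertex := {a : V | a \in codom j}.

Definition image_rel : rel image_vertex := fun a b =>
  (val a != val b) && [exists v, exists w, [&& sadj v w, j v == val a & j w == val b]].

Lemma image_rel_sym : symmetric image_rel.
Proof.
move=> a b; rewrite /image_rel eq_sym; congr (_ && _).
by apply/existsP/existsP => -[v /existsP [w /and3P [e ea eb]]];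
  exists w; apply/existsP; exists v; rewrite sadj_sym e ea eb.
Qed.

Lemma image_rel_irr : irreflexive image_rel.
Proof. by move=> a; rewrite /image_rel eqxx. Qed.

Definition image_graph : sgraph := SGraph image_rel_sym image_rel_irr.

Definition image_of (v : G) : image_graph := exist _ (j v) (codom_f j v).

Lemma image_of_adj v w : sadj v w -> adj_or_eq (image_of v) (image_of w).
Proof.
move=> e; rewrite /adj_or_eq; case: (eqVneq (image_of v) (image_of w)) => //= ne.
move: ne; rewrite -(inj_eq val_inj) /image_rel /= => ->.
by apply/existsP; exists v; apply/existsP; exists w; rewrite e !eqxx.
Qed.

End ImageGraph.

Lemma fiber_index (A : finType) (C : eqType) (f : A -> C) n :
  (forall a, #|[set b | f b == f a]| <= n) ->
  exists g : A -> 'I_n, injective (fun a => (f a, g a)).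
Proof.
move=> fiber_le; pose fiber a := enum [set b | f b == f a].
have lt a : index a (fiber a) < n.
  by apply: leq_trans (fiber_le a); rewrite cardE index_mem mem_enum inE.
exists (fun a => Ordinal (lt a)) => a b [Ef /= Ei].
have Efib : fiber a = fiber b by rewrite /fiber Ef.
have aF : a \in fiber a by rewrite mem_enum inE.
have bF : b \in fiber a by rewrite Efib mem_enum inE.
by rewrite -(nth_index a aF) Ei -Efib (nth_index a bF).
Qed.

Lemma tree_connect (T : sgraph) : is_tree T -> forall x y : T, connect (@sadj T) x y.
Proof.
case=> -[_ cT] _ x y; apply: connect_sub (cT x y _ _) => [u w /induced_rel_sub /connect1 //||];
  by rewrite inE.
Qed.

Section ShallowMinorOfProduct.
Variables (r t k l : nat) (H L G T : sgraph) (B : T -> {set H}).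
Hypothesis T_tree : is_tree T.
Hypothesis B_cover : forall v : H, exists x : T, v \in B x.
Hypothesis B_edge : forall u v : H, sadj u v -> exists x : T, (u \in B x) && (v \in B x).
Hypothesis B_connected : forall v : H, connected_set [set x : T | v \in B x].
Hypothesis B_size : forall x : T, #|B x| <= t.+1.
Hypothesis L_power_deg : maxdeg_le (gpower L r) k.

Local Notation P := (sprod (sprod H L) (Kn l)).
Variable mu : G -> {set P}.
Hypothesis mu_model : is_model mu.
Hypothesis mu_radius : forall v, exists2 c, c \in mu v &
  forall x, x \in mu v -> walkle (induced_rel (mu v)) r c x.

Let T_connected := tree_connect T_tree.
Let T_acyclic : acyclic T := T_tree.2.
Let rho : T := xchoose (elimT (set0Pn _) T_tree.1.1).

Local Notation key := (key B T_connected rho).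

Definition proj_H (p : P) : H := p.1.1.
Definition proj_L (p : P) : L := p.1.2.

Lemma weak_hom_proj_H : weak_hom proj_H.
Proof. exact: weak_hom_comp (@weak_hom_fst _ _) (@weak_hom_fst _ _). Qed.

Lemma weak_hom_proj_L : weak_hom proj_L.
Proof. exact: weak_hom_comp (@weak_hom_fst _ _) (@weak_hom_snd _ _). Qed.

Definition is_center v c :=
  (c \in mu v) && [forall x in mu v, walkle (induced_rel (mu v)) r c x].

Lemma ex_center v : exists c, is_center v c.
Proof.
have [c cin cw] := mu_radius v; exists c; rewrite /is_center cin /=.
by apply/forall_inP => x /cw.
Qed.

Definition center v := xchoose (ex_center v).

Lemma center_in v : center v \in mu v.
Proof. by case/andP: (xchooseP (ex_center v)). Qed.

Lemma center_walkle v x : x \in mu v -> walkle (induced_rel (mu v)) r (center v) x.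
Proof. by case/andP: (xchooseP (ex_center v)) => _ /forall_inP; apply. Qed.

Lemma mu_walkle v p q : p \in mu v -> q \in mu v -> walkle (induced_rel (mu v)) (r + r) p q.
Proof.
move=> pin qin; apply: walkle_cat (center_walkle qin).
exact: walkle_sym (@induced_rel_sym _ _) _ _ _ (center_walkle pin).
Qed.

Definition shadow v : {set H} := proj_H @: mu v.

Lemma shadow_connected v : connected_set (shadow v).
Proof. by case: mu_model => mu_conn _ _; apply/connected_imset/mu_conn/weak_hom_proj_H. Qed.

Definition anchor v : H := [arg min_(h < proj_H (center v) in shadow v) key h].

Lemma anchor_spec v : anchor v \in shadow v /\ {in shadow v, forall h, key (anchor v) <= key h}.
Proof. by rewrite /anchor; case: arg_minnP => //; apply/imset_f/center_in. Qed.

Lemma anchor_in v : anchor v \in shadow v.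
Proof. by case: (anchor_spec v). Qed.

Lemma anchor_min v h : h \in shadow v -> key (anchor v) <= key h.
Proof. by case: (anchor_spec v) => _; apply. Qed.

Lemma anchor_wreach v h : h \in shadow v ->
  walkle (wrel B T_connected rho (anchor v)) (r + r) h (anchor v).
Proof.
move=> hS; have sub : subrel (induced_rel (shadow v)) (wrel B T_connected rho (anchor v)).
  move=> u w /and3P [e uS wS]; rewrite /wrel !anchor_min // /cobag sadj_neq //= !andbT.
  by have [x uwx] := B_edge e; apply/existsP; exists x.
apply: sub_walkle sub _; case/imsetP: hS => p pin ->; case/imsetP: (anchor_in v) => q qin ->.
exact: walkle_induced_imset weak_hom_proj_H (mu_walkle pin qin).
Qed.

Local Notation J := (image_graph anchor).

Definition anchor_bag (x : T) : {set J} :=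
  [set a : J | [exists v, (anchor v == val a) && [exists h in shadow v, h \in B x]]].

Lemma mem_anchor_bag v x h : h \in shadow v -> h \in B x -> image_of anchor v \in anchor_bag x.
Proof.
move=> hS hx; rewrite inE; apply/existsP; exists v; rewrite eqxx /=.
by apply/existsP; exists h; rewrite hS.
Qed.

Lemma image_of_anchor (a : J) v : anchor v == val a -> a = image_of anchor v.
Proof. by move=> /eqP E; apply: val_inj. Qed.

Lemma anchor_bag_cover (a : J) : exists x, a \in anchor_bag x.
Proof.
have [v Ev] := codomP (valP a); have [x hx] := B_cover (anchor v).
by exists x; rewrite (@image_of_anchor a v) ?Ev //; apply: mem_anchor_bag (anchor_in v) hx.
Qed.

Lemma anchor_bag_edge (a b : J) :
  sadj a b -> exists x, (a \in anchor_bag x) && (b \in anchor_bag x).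
Proof.
case/andP=> _ /existsP [v /existsP [w /and3P [e /image_of_anchor -> /image_of_anchor ->]]].
case: mu_model => _ _ /(_ v w e) [p [q [pin qin epq]]].
have pS : proj_H p \in shadow v by apply: imset_f.
have qS : proj_H q \in shadow w by apply: imset_f.
case/orP: (weak_hom_proj_H epq) => [/eqP E|/B_edge [x /andP [px qx]]].
  have [x hx] := B_cover (proj_H p).
  by exists x; rewrite (mem_anchor_bag pS) // (mem_anchor_bag qS) -?E.
by exists x; rewrite (mem_anchor_bag pS) // (mem_anchor_bag qS).
Qed.

Lemma anchor_bag_connected (a : J) : connected_set [set x | a \in anchor_bag x].
Proof.
have -> : [set x | a \in anchor_bag x] =
    \bigcup_(v | anchor v == val a) [set x | [exists h in shadow v, h \in B x]].
  apply/setP => x; rewrite !inE; apply/existsP/bigcupP => -[v].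
    by case/andP=> av hx; exists v; rewrite ?inE.
  by move=> av; rewrite inE => hx; exists v; rewrite av.
have [z0 z0a] := B_cover (val a); apply: (@connected_bigcup _ _ _ _ z0).
- by have [v Ev] := codomP (valP a); exists v; rewrite Ev.
- move=> v _; exact: (connected_bags_meeting B_cover B_edge B_connected (shadow_connected v)).
- move=> v /eqP av; rewrite inE; apply/existsP; exists (val a).
  by rewrite -av anchor_in av z0a.
Qed.

Lemma anchor_bag_size x : #|anchor_bag x| <= ('C(2 * r + 1 + t, t) - 1).+1.
Proof.
rewrite subn1 prednK ?bin_gt0 ?leq_addl // -(card_imset _ val_inj).
have -> : 2 * r + 1 + t = r + r + t.+1 by lia.
apply: leq_trans (card_wreach_bag T_connected T_acyclic rho B_connected (r + r) x B_size).
apply/subset_leq_card/subsetP => _ /imsetP [a ain ->]; move: ain; rewrite !inE.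
case/existsP=> v /andP [/eqP <- /existsP [h /andP [hS hx]]].
by apply/existsP; exists h; rewrite hx anchor_wreach.
Qed.

Lemma tw_anchor_graph : tw_le J ('C(2 * r + 1 + t, t) - 1).
Proof.
exists T, anchor_bag; split => //.
- exact: anchor_bag_cover.
- exact: anchor_bag_edge.
- exact: anchor_bag_connected.
- exact: anchor_bag_size.
Qed.

Definition center_L v : L := proj_L (center v).

Lemma ex_anchor_point w : exists q, (q \in mu w) && (proj_H q == anchor w).
Proof. by case/imsetP: (anchor_in w) => q qin E; exists q; rewrite qin E eqxx. Qed.

Definition anchor_point w := xchoose (ex_anchor_point w).

Lemma anchor_point_in w : anchor_point w \in mu w.
Proof. by case/andP: (xchooseP (ex_anchor_point w)). Qed.

Lemma proj_H_anchor_point w : proj_H (anchor_point w) = anchor w.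
Proof. by case/andP: (xchooseP (ex_anchor_point w)) => _ /eqP. Qed.

Lemma anchor_point_inj : injective anchor_point.
Proof.
move=> v w E; apply/eqP; apply: contraT => nvw; case: mu_model => _ /(_ v w nvw) dj _.
by have := disjointFr dj (anchor_point_in v); rewrite E anchor_point_in.
Qed.

Definition coarse_image v : J * L := (image_of anchor v, center_L v).

(* Branch sets are disjoint, so the points above the common anchor separate a fibre. *)
Lemma card_coarse_fiber v : #|[set w | coarse_image w == coarse_image v]| <= l * (k + 1).
Proof.
pose g w := (proj_L (anchor_point w), (anchor_point w).2).
have g_inj : {in [set w | coarse_image w == coarse_image v] &, injective g}.
  move=> w1 w2; rewrite !inE => /eqP [j1 _] /eqP [j2 _] E.
  apply: anchor_point_inj; move: E (proj_H_anchor_point w1) (proj_H_anchor_point w2).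
  rewrite /g /proj_L /proj_H j1 j2.
  case: (anchor_point w1) => [[a1 b1] c1]; case: (anchor_point w2) => [[a2 b2] c2].
  by move=> /= [-> ->] -> ->.
rewrite -(card_in_imset g_inj).
apply: leq_trans (_ : #|setX [set y | walkle (@sadj L) r (center_L v) y] [set: 'I_l]| <= _).
  apply/subset_leq_card/subsetP => _ /imsetP [w win ->]; rewrite !inE andbT.
  move: win; rewrite inE => /eqP [_ <-]; apply: (walkle_weak_hom weak_hom_proj_L).
  exact: sub_walkle (@induced_rel_sub _ _) (center_walkle (anchor_point_in w)).
by rewrite cardsX cardsT card_ord mulnC leq_mul2l addn1 card_ball ?orbT.
Qed.

Lemma center_L_adj v w : sadj v w -> @adj_or_eq (gpower L (2 * r + 1)) (center_L v) (center_L w).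
Proof.
move=> e; apply: adj_or_eq_gpower; rewrite (_ : 2 * r + 1 = r + (1 + r)); last lia.
case: mu_model => _ _ /(_ v w e) [p [q [pin qin epq]]].
apply: (walkle_weak_hom weak_hom_proj_L); apply: walkle_cat (walkle_cat (walkle1 epq) _).
- exact: sub_walkle (@induced_rel_sub _ _) (center_walkle pin).
- exact: walkle_sym (@sadj_sym P) _ _ _ (sub_walkle (@induced_rel_sub _ _) (center_walkle qin)).
Qed.

Lemma contained_anchor_product :
  contained G (sprod (sprod J (gpower L (2 * r + 1))) (Kn (l * (k + 1)))).
Proof.
have [g g_inj] := fiber_index card_coarse_fiber.
exists (fun v => (coarse_image v, g v)); split => // v w e.
rewrite sprod_adjE (inj_eq g_inj) (sadj_neq e) adj_or_eq_Kn andbT /=.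
by rewrite adj_or_eq_sprod image_of_adj ?center_L_adj.
Qed.

End ShallowMinorOfProduct.

Theorem theorem7 (r t k l : nat) (H L G : sgraph) :
  0 < l ->
  tw_le H t ->
  maxdeg_le (gpower L r) k ->
  shallow_minor r G (sprod (sprod H L) (Kn l)) ->
  exists J : sgraph,
    tw_le J ('C(2 * r + 1 + t, t) - 1) /\
    contained G (sprod (sprod J (gpower L (2 * r + 1))) (Kn (l * (k + 1)))).
Proof.
move=> _ [T [B [T_tree B_cover B_edge B_connected B_size]]] L_deg [mu [mu_model mu_radius]].
exists (image_graph (anchor B T_tree mu_radius)); split.
- exact: (tw_anchor_graph T_tree B_cover B_edge B_connected B_size mu_model mu_radius).
- exact: (contained_anchor_product B T_tree L_deg mu_model mu_radius).
Qed.
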